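(* (Stability.) Let $1\le m\le n$, $x=(x_1,\dots,x_m)$, $y=(y_1,\dots,y_n)$, and write $x^{(m)}=(x_1,\dots,x_{m-1})$, $y^{(n)}=(y_1,\dots,y_{n-1})$. Then \[F(u;x,y;t)\big|_{x_my_n=1}=F(u;x^{(m)},y^{(n)};t)\quad\text{and}\quad F(u;x,y;t)\big|_{x_m=y_n=0}=(1-u)F(ut;x^{(m)},y^{(n)};t).\]
   Context: For $x=(x_1,\dots,x_m)$, $y=(y_1,\dots,y_n)$, \[F(u;x,y;t)=\sum_{I\subseteq\{1,\dots,m\}}(-u)^{|I|}t^{\binom{|I|}{2}}\prod_{i\in I,\ j\in\{1,\dots,m\}\setminus I}\frac{tx_i-x_j}{x_i-x_j}\prod_{i\in I}\prod_{j=1}^n\frac{1-x_iy_j}{1-tx_iy_j}.\] *)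

From mathcomp Require Import all_boot all_order all_algebra.
Set Implicit Arguments. Unset Strict Implicit. Unset Printing Implicit Defensive.
Import GRing.Theory.
Local Open Scope ring_scope.

(* F(u;x,y;t) evaluated at a point of a field K, x = (x_1..x_m), y = (y_1..y_n)
   (indices shifted to 0..m-1, 0..n-1). *)
Definition Ffun (K : fieldType) (m n : nat) (u : K) (x : 'I_m -> K)
    (y : 'I_n -> K) (t : K) : K :=
  \sum_(I : {set 'I_m})
    ((- u) ^+ #|I| * t ^+ 'C(#|I|, 2)
     * (\prod_(i in I) \prod_(j in ~: I) ((t * x i - x j) / (x i - x j)))
     * (\prod_(i in I) \prod_(j < n) ((1 - x i * y j) / (1 - t * x i * y j)))).

Definition droplast (K : Type) (m : nat) (x : 'I_m.+1 -> K) : 'I_m -> K :=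
  fun i => x (widen_ord (leqnSn m) i).

(** Split the sum defining [F] according to whether the subset [I] contains
    the last index [m].  When [x_m y_n = 1], every subset containing [m]
    contributes [0] (its kernel factor [1 - x_m y_n] vanishes), while for the
    other subsets the two factors involving [x_m] and [y_n] cancel, because
    [(t x_i - x_m)(1 - x_i y_n) - (x_i - x_m)(1 - t x_i y_n)] equals
    [(t - 1) x_i (1 - x_m y_n)].  When [x_m = y_n = 0], the factors
    [(t x_i - x_m)/(x_i - x_m)] become [t], turning [(-u)^k] into [(-u t)^k];
    a subset containing [m] contributes [-u] times the term of the remaining
    subset, hence [1 - u]. *)

From mathcomp Require Import all_boot all_order all_algebra.
From mathcomp Require Import ring.
Import GRing.Theory.
Local Open Scope ring_scope.

Local Notation widen := (widen_ord (leqnSn _)).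

Section SubsetsOfOrdS.
Context {m : nat}.

Lemma widen_inj : injective (widen : 'I_m -> 'I_m.+1).
Proof. by move=> i j /(congr1 val) /= /val_inj. Qed.

Lemma widen_neq_max (i : 'I_m) : (widen i == ord_max) = false.
Proof. by apply/negbTE; rewrite -val_eqE /= neq_ltn ltn_ord. Qed.

Definition widen_set (J : {set 'I_m}) : {set 'I_m.+1} := widen @: J.

Lemma mem_widen_set J i : (widen i \in widen_set J) = (i \in J).
Proof. exact/mem_imset/widen_inj. Qed.

Lemma max_notin_widen_set J : (ord_max \in widen_set J) = false.
Proof. by apply/negbTE/imsetP => -[i _ /eqP]; rewrite eq_sym widen_neq_max. Qed.

Lemma card_widen_set J : #|widen_set J| = #|J|.
Proof. exact/card_imset/widen_inj. Qed.

Lemma card_setU1_widen_set J : #|ord_max |: widen_set J| = #|J|.+1.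
Proof. by rewrite cardsU1 max_notin_widen_set card_widen_set. Qed.

Lemma ord_maxVwiden (k : 'I_m.+1) : k = ord_max \/ exists i, k = widen i.
Proof.
case: (unliftP ord_max k) => [i ->|->]; last by left.
by right; exists i; apply: val_inj; exact: lift_max.
Qed.

Lemma widen_set_preim (I : {set 'I_m.+1}) :
  ord_max \notin I -> widen_set [set i | widen i \in I] = I.
Proof.
move=> Imax; apply/setP => k; case: (ord_maxVwiden k) => [->|[i ->]].
  by rewrite max_notin_widen_set (negbTE Imax).
by rewrite mem_widen_set inE.
Qed.

Lemma setU1_widen_set_preim (I : {set 'I_m.+1}) :
  ord_max \in I -> ord_max |: widen_set [set i | widen i \in I] = I.
Proof.
move=> Imax; apply/setP => k; case: (ord_maxVwiden k) => [->|[i ->]].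
  by rewrite setU11 Imax.
by rewrite in_setU1 widen_neq_max mem_widen_set inE.
Qed.

Section BigOp.
Variables (R : Type) (idx : R) (op : Monoid.com_law idx).

Lemma big_subsets_ord_recr (F : {set 'I_m.+1} -> R) :
  \big[op/idx]_(I : {set 'I_m.+1}) F I =
  op (\big[op/idx]_(J : {set 'I_m}) F (widen_set J))
     (\big[op/idx]_(J : {set 'I_m}) F (ord_max |: widen_set J)).
Proof.
rewrite (bigID (fun I : {set 'I_m.+1} => ord_max \in I)) /= Monoid.mulmC.
congr (op _ _).
- rewrite (reindex_onto widen_set (fun I => [set i | widen i \in I]))
    => [|I /widen_set_preim //].
  apply: eq_bigl => J; rewrite max_notin_widen_set /=.
  by apply/eqP/setP => i; rewrite inE mem_widen_set.
- rewrite (reindex_onto (fun J => ord_max |: widen_set J)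
                        (fun I => [set i | widen i \in I]))
    => [|I /setU1_widen_set_preim //].
  apply: eq_bigl => J; rewrite setU11 /=.
  by apply/eqP/setP => i; rewrite inE in_setU1 widen_neq_max mem_widen_set.
Qed.

Lemma big_ord_recr_in (A : {pred 'I_m.+1}) (G : 'I_m.+1 -> R) :
  \big[op/idx]_(k in A) G k =
  op (\big[op/idx]_(i < m | widen i \in A) G (widen i))
     (if ord_max \in A then G ord_max else idx).
Proof. by rewrite big_mkcond big_ord_recr /= -big_mkcond. Qed.

Lemma big_widen_set J (G : 'I_m.+1 -> R) :
  \big[op/idx]_(k in widen_set J) G k = \big[op/idx]_(i in J) G (widen i).
Proof.
rewrite big_ord_recr_in max_notin_widen_set Monoid.mulm1.
by apply: eq_bigl => i; rewrite mem_widen_set.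
Qed.

Lemma big_setC_widen_set J (G : 'I_m.+1 -> R) :
  \big[op/idx]_(k in ~: widen_set J) G k =
  op (\big[op/idx]_(i in ~: J) G (widen i)) (G ord_max).
Proof.
rewrite big_ord_recr_in inE max_notin_widen_set; congr (op _ _).
by apply: eq_bigl => i; rewrite !inE mem_widen_set.
Qed.

Lemma big_setU1_widen_set J (G : 'I_m.+1 -> R) :
  \big[op/idx]_(k in ord_max |: widen_set J) G k =
  op (\big[op/idx]_(i in J) G (widen i)) (G ord_max).
Proof.
rewrite big_ord_recr_in setU11; congr (op _ _).
by apply: eq_bigl => i; rewrite in_setU1 widen_neq_max mem_widen_set.
Qed.

Lemma big_setC_setU1_widen_set J (G : 'I_m.+1 -> R) :
  \big[op/idx]_(k in ~: (ord_max |: widen_set J)) G k =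
  \big[op/idx]_(i in ~: J) G (widen i).
Proof.
rewrite big_ord_recr_in inE setU11 Monoid.mulm1.
by apply: eq_bigl => i; rewrite !inE widen_neq_max mem_widen_set.
Qed.

End BigOp.
End SubsetsOfOrdS.

Section Summands.
Context {K : fieldType}.

Definition Fterm {m n : nat} (u : K) (x : 'I_m -> K) (y : 'I_n -> K) (t : K)
    (I : {set 'I_m}) : K :=
  (- u) ^+ #|I| * t ^+ 'C(#|I|, 2)
  * (\prod_(i in I) \prod_(j in ~: I) ((t * x i - x j) / (x i - x j)))
  * (\prod_(i in I) \prod_(j < n) ((1 - x i * y j) / (1 - t * x i * y j))).

Lemma FfunE m n u (x : 'I_m -> K) (y : 'I_n -> K) t :
  Ffun u x y t = \sum_(I : {set 'I_m}) Fterm u x y t I.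
Proof. by []. Qed.

Lemma Fterm_Mt m n u (x : 'I_m -> K) (y : 'I_n -> K) t I :
  Fterm (u * t) x y t I = Fterm u x y t I * t ^+ #|I|.
Proof. by rewrite /Fterm -mulNr exprMn; ring. Qed.

Lemma Fterm_eq0 {m n u} {x : 'I_m -> K} {y : 'I_n -> K} {t}
    {I : {set 'I_m}} {i j} :
  i \in I -> x i * y j = 1 -> Fterm u x y t I = 0.
Proof.
move=> Ii xy1; rewrite /Fterm [X in _ * X](bigD1 i) //=.
by rewrite [X in _ * (X * _)](bigD1 j) //= xy1 subrr !mul0r mulr0.
Qed.

Lemma cross_kernel_factor_cancel (t a b c : K) :
  b * c = 1 -> a != b -> 1 - t * a * c != 0 ->
  (t * a - b) / (a - b) * ((1 - a * c) / (1 - t * a * c)) = 1.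
Proof.
move=> bc1 ab tac; rewrite mulf_div.
have -> : (t * a - b) * (1 - a * c) = (a - b) * (1 - t * a * c).
  apply/eqP; rewrite -subr_eq0; apply/eqP.
  by transitivity ((t - 1) * a * (1 - b * c)); [ring | rewrite bc1 subrr mulr0].
by rewrite divff // mulf_neq0 // subr_eq0.
Qed.

Variables (m n : nat) (x : 'I_m.+1 -> K) (y : 'I_n.+1 -> K) (t : K).

Lemma Fterm_widen_set u J :
  Fterm u x y t (widen_set J) =
  Fterm u (droplast x) (droplast y) t J *
  \prod_(i in J) ((t * x (widen i) - x ord_max) / (x (widen i) - x ord_max)
    * ((1 - x (widen i) * y ord_max) / (1 - t * x (widen i) * y ord_max))).
Proof.
rewrite /Fterm /droplast card_widen_set !big_widen_set.
under eq_bigr do rewrite big_setC_widen_set.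
under [X in _ * X = _]eq_bigr do rewrite big_ord_recr /=.
rewrite !big_split /=; ring.
Qed.

Lemma Fterm_setU1_widen_set u J :
  x ord_max = 0 -> y ord_max = 0 -> (forall i, x (widen i) != 0) ->
  Fterm u x y t (ord_max |: widen_set J) =
  - u * Fterm (u * t) (droplast x) (droplast y) t J.
Proof.
move=> x0 y0 xw0.
rewrite /Fterm /droplast card_setU1_widen_set.
rewrite !big_setU1_widen_set /= big_setC_setU1_widen_set /=.
under eq_bigr do rewrite big_setC_setU1_widen_set /=.
under [X in _ * (X * _) = _]eq_bigr do
  rewrite big_ord_recr /= y0 !mulr0 subr0 divr1 mulr1.
have cross_max :
    \prod_(j in ~: J) ((t * 0 - x (widen j)) / (0 - x (widen j))) = 1.
  by apply: big1 => j _; rewrite mulr0 !sub0r divff // oppr_eq0.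
have kernel_max : \prod_(j < n.+1) ((1 - 0 * y j) / (1 - t * 0 * y j)) = 1.
  by apply: big1 => j _; rewrite mulr0 !mul0r subr0 divr1.
rewrite x0 cross_max kernel_max binS bin1 exprD exprS -mulNr exprMn; ring.
Qed.

End Summands.

Theorem lemma3p1 (K : fieldType) (m n : nat) (hmn : (m <= n)%N)
  (u t : K) (x : 'I_m.+1 -> K) (y : 'I_n.+1 -> K)
  (hx : injective x)
  (hden : forall i j, 1 - t * x i * y j != 0) :
  (x ord_max * y ord_max = 1 ->
     Ffun u x y t = Ffun u (droplast x) (droplast y) t) /\
  (x ord_max = 0 -> y ord_max = 0 ->
     Ffun u x y t = (1 - u) * Ffun (u * t) (droplast x) (droplast y) t).
Proof.
have x_widen_neq_max i : x (widen i) != x ord_max.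
  by apply/negP => /eqP /hx /eqP; rewrite widen_neq_max.
rewrite !FfunE big_subsets_ord_recr /=; split=> [xy1 | x0 y0].
- have -> : \sum_J Fterm u x y t (ord_max |: widen_set J) = 0.
    by apply: big1 => J _; exact: Fterm_eq0 (setU11 _ _) xy1.
  rewrite addr0.
  apply: eq_bigr => J _; rewrite Fterm_widen_set big1 ?mulr1 // => i _.
  exact: cross_kernel_factor_cancel.
- have x_widen_neq0 i : x (widen i) != 0 by rewrite -x0.
  rewrite mulrBl mul1r mulr_sumr -sumrN; congr (_ + _); apply: eq_bigr => J _.
  + rewrite Fterm_widen_set Fterm_Mt -prodr_const; congr (_ * _).
    apply: eq_bigr => i _.
    by rewrite x0 y0 !subr0 mulfK // !mulr0 subr0 divr1 mulr1.
  + by rewrite Fterm_setU1_widen_set // mulNr.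
Qed.
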